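(* Let $X$ be a complete CAT(1) space with $\mathrm{Diam}(X)<\pi/2$. Then every vicinal mapping $T\colon X\to X$ has a fixed point.
   Context: A CAT(1) space is a $\pi$-geodesic metric space in which every geodesic triangle of perimeter $<2\pi$ satisfies the CAT(1) comparison inequality relative to comparison triangles in the unit sphere $\mathbb S^2$. With $C_z=\cos d(Tz,z)$, $T$ is vicinal if for all $x,y\in X$: $\bigl(C_x^2(1+C_y^2)+C_y^2(1+C_x^2)\bigr)\cos d(Tx,Ty)\ge C_x^2(1+C_y^2)\cos d(Tx,y)+C_y^2(1+C_x^2)\cos d(Ty,x)$. *)

From Stdlib Require Import Reals.
Open Scope R_scope.

Definition is_metric {X : Type} (d : X -> X -> R) : Prop :=
  (forall x y, 0 <= d x y) /\
  (forall x y, d x y = 0 <-> x = y) /\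
  (forall x y, d x y = d y x) /\
  (forall x y z, d x z <= d x y + d y z).

Definition complete {X : Type} (d : X -> X -> R) : Prop :=
  forall u : nat -> X,
    (forall eps, 0 < eps -> exists N : nat, forall m n, (N <= m)%nat -> (N <= n)%nat ->
        d (u m) (u n) < eps) ->
    exists l : X, forall eps, 0 < eps -> exists N : nat, forall n, (N <= n)%nat ->
        d (u n) l < eps.

Definition geodesic {X : Type} (d : X -> X -> R) (x y : X) (c : R -> X) : Prop :=
  c 0 = x /\ c (d x y) = y /\
  forall s t, 0 <= s <= d x y -> 0 <= t <= d x y -> d (c s) (c t) = Rabs (s - t).

Definition pi_geodesic {X : Type} (d : X -> X -> R) : Prop :=
  forall x y, d x y < PI -> exists c, geodesic d x y c.

Definition R3 : Type := (R * R * R)%type.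
Definition dot3 (u v : R3) : R :=
  let '(u1, u2, u3) := u in let '(v1, v2, v3) := v in u1 * v1 + u2 * v2 + u3 * v3.
Definition on_S2 (u : R3) : Prop := dot3 u u = 1.
Definition sdist (u v : R3) : R := acos (dot3 u v).

(** (p, pb) is a pair of corresponding points on the side c from a to b of a geodesic
    triangle and on the side [ab, bb] of a comparison triangle in S^2: p = c t and pb is
    the point of S^2 on the (minimal) comparison segment at distance t from ab. *)
Definition corr_on_side {X : Type} (d : X -> X -> R) (a b : X) (c : R -> X)
    (ab bb : R3) (p : X) (pb : R3) : Prop :=
  exists t, 0 <= t <= d a b /\ p = c t /\ on_S2 pb /\
            sdist ab pb = t /\ sdist pb bb = d a b - t.

Definition CAT1 {X : Type} (d : X -> X -> R) : Prop :=
  is_metric d /\ pi_geodesic d /\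
  forall (x y z : X) (cxy cyz czx : R -> X),
    geodesic d x y cxy -> geodesic d y z cyz -> geodesic d z x czx ->
    d x y + d y z + d z x < 2 * PI ->
    forall xb yb zb : R3, on_S2 xb -> on_S2 yb -> on_S2 zb ->
      sdist xb yb = d x y -> sdist yb zb = d y z -> sdist zb xb = d z x ->
      forall (p q : X) (pb qb : R3),
        (corr_on_side d x y cxy xb yb p pb \/ corr_on_side d y z cyz yb zb p pb \/
         corr_on_side d z x czx zb xb p pb) ->
        (corr_on_side d x y cxy xb yb q qb \/ corr_on_side d y z cyz yb zb q qb \/
         corr_on_side d z x czx zb xb q qb) ->
        d p q <= sdist pb qb.

Definition diam_lt {X : Type} (d : X -> X -> R) (r : R) : Prop :=
  exists D, D < r /\ forall x y, d x y <= D.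

Definition vicinal {X : Type} (d : X -> X -> R) (T : X -> X) : Prop :=
  forall x y : X,
    let Cx := cos (d (T x) x) in
    let Cy := cos (d (T y) y) in
    (Cx ^ 2 * (1 + Cy ^ 2) + Cy ^ 2 * (1 + Cx ^ 2)) * cos (d (T x) (T y))
    >= Cx ^ 2 * (1 + Cy ^ 2) * cos (d (T x) y) + Cy ^ 2 * (1 + Cx ^ 2) * cos (d (T y) x).

From Stdlib Require Import Reals Lra Psatz Lia Classical IndefiniteDescription.
Open Scope R_scope.

(* Let (x_n) be an orbit of T, and for y in X let phi(y) = liminf cos d(x_n, y) and M = sup phi.
   Comparing the triangle (x, y1, y2) with its model triangle in S^2 gives, for the midpoint m
   of [y1, y2], cos d(x, m) >= (cos d(x, y1) + cos d(x, y2)) / (2 cos (d(y1, y2)/2)); hence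
   phi(y1) + phi(y2) <= 2 M cos (d(y1, y2)/2). As M >= cos Diam(X) > 0, near-maximizers of phi
   are close to each other, so by completeness phi has a maximizer z, and it is unique.
   Vicinality of T at (x_n, z) makes cos d(x_(n+1), Tz) catch up geometrically with
   cos d(x_(n+1), z), so phi(Tz) >= phi(z) = M and Tz = z. *)


Lemma Rabs_cos_sub_le a b : Rabs (cos a - cos b) <= Rabs (a - b).
Proof.
  destruct (MVT_abs cos (fun x => - sin x) b a) as [c [-> _]].
  { intros; apply derivable_pt_lim_cos. }
  rewrite Rabs_Ropp.
  assert (Rabs (sin c) <= 1) by (apply Rabs_le; pose proof (SIN_bound c); lra).
  pose proof (Rabs_pos (a - b)); nra.
Qed.

(* Gram determinant of three unit vectors at mutual angles a, b, l. *)
Lemma cos_triangle_gram_nonneg a b l :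
  0 <= a -> 0 <= b -> 0 <= l -> a + b <= PI ->
  l <= a + b -> a <= b + l -> b <= a + l ->
  0 <= 1 - cos a ^ 2 - cos b ^ 2 - cos l ^ 2 + 2 * cos a * cos b * cos l.
Proof.
  intros.
  assert (Hlo : cos (a + b) <= cos l) by (apply cos_decr_1; lra).
  assert (Hhi : cos l <= cos (a - b)).
  { destruct (Rle_dec b a).
    - apply cos_decr_1; lra.
    - replace (a - b) with (- (b - a)) by ring. rewrite cos_neg. apply cos_decr_1; lra. }
  rewrite cos_plus in Hlo. rewrite cos_minus in Hhi.
  assert (Sa : sin a * sin a = 1 - cos a * cos a)
    by (pose proof (sin2_cos2 a) as E; unfold Rsqr in E; lra).
  assert (Sb : sin b * sin b = 1 - cos b * cos b)
    by (pose proof (sin2_cos2 b) as E; unfold Rsqr in E; lra).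
  replace (1 - cos a ^ 2 - cos b ^ 2 - cos l ^ 2 + 2 * cos a * cos b * cos l)
    with ((cos l - (cos a * cos b - sin a * sin b)) * ((cos a * cos b + sin a * sin b) - cos l))
    by (transitivity ((sin a * sin a) * (sin b * sin b) - (cos l - cos a * cos b) ^ 2);
        [ring | rewrite Sa, Sb; ring]).
  apply Rmult_le_pos; lra.
Qed.

Lemma dot3_comm u v : dot3 u v = dot3 v u.
Proof. destruct u as [[u1 u2] u3], v as [[v1 v2] v3]; simpl; ring. Qed.

Lemma sdist_refl u : on_S2 u -> sdist u u = 0.
Proof. intros Hu; unfold sdist; rewrite Hu; apply acos_1. Qed.

Lemma sdist_of_dot3 u v t : 0 <= t <= PI -> dot3 u v = cos t -> sdist u v = t.
Proof. intros Ht Huv; unfold sdist; rewrite Huv; apply acos_cos, Ht. Qed.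

Lemma on_S2_circle u v : u * u + v * v = 1 -> on_S2 (u, v, 0).
Proof. unfold on_S2; simpl; lra. Qed.

(* The comparison triangle for a triangle with sides a, b, 2h: the base vertices are
   (cos h, -/+ sin h, 0), so that the midpoint of the base is (1, 0, 0). *)
Lemma S2_comparison_apex a b h :
  0 < h < PI / 2 -> 0 <= a -> 0 <= b -> a + b <= PI ->
  2 * h <= a + b -> a <= b + 2 * h -> b <= a + 2 * h ->
  exists P, on_S2 P /\ dot3 P (cos h, - sin h, 0) = cos a /\
    dot3 P (cos h, sin h, 0) = cos b /\ dot3 P (1, 0, 0) = (cos a + cos b) / (2 * cos h).
Proof.
  intros Hh Ha Hb Hab H1 H2 H3.
  set (c := cos h); set (s := sin h).
  assert (Hc : 0 < c) by (apply cos_gt_0; lra).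
  assert (Hs : 0 < s) by (apply sin_gt_0; lra).
  assert (Hcs : s * s + c * c = 1) by (pose proof (sin2_cos2 h) as E; unfold Rsqr in E; exact E).
  assert (Hgram := cos_triangle_gram_nonneg a b (2 * h) Ha Hb ltac:(lra) Hab H1 H2 H3).
  rewrite cos_2a in Hgram; fold c s in Hgram.
  set (p := (cos a + cos b) / (2 * c)); set (q := (cos b - cos a) / (2 * s)).
  assert (Hp : 2 * c * p = cos a + cos b) by (unfold p; field; lra).
  assert (Hq : 2 * s * q = cos b - cos a) by (unfold q; field; lra).
  assert (Hpq : 0 <= 1 - p * p - q * q).
  { assert (E : 4 * (c * c) * (s * s) * (1 - p * p - q * q)
      = 1 - cos a ^ 2 - cos b ^ 2 - (c * c - s * s) ^ 2 + 2 * cos a * cos b * (c * c - s * s)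
        + (s * s + c * c - 1) * (c * c + s * s + 1 - cos a ^ 2 - cos b ^ 2)).
    { transitivity (4 * c * c * s * s - s * s * (2 * c * p) ^ 2 - c * c * (2 * s * q) ^ 2);
        [ring | rewrite Hp, Hq; ring]. }
    rewrite Hcs, Rminus_diag, Rmult_0_l, Rplus_0_r in E.
    assert (0 < 4 * (c * c) * (s * s)) by (repeat apply Rmult_lt_0_compat; lra).
    nra. }
  exists (p, q, sqrt (1 - p * p - q * q)).
  pose proof (sqrt_sqrt _ Hpq) as Hr.
  unfold on_S2; simpl; repeat split.
  - lra.
  - unfold p, q; field; lra.
  - unfold p, q; field; lra.
  - unfold p; ring.
Qed.

Lemma CAT1_metric {X : Type} (d : X -> X -> R) : CAT1 d -> is_metric d.
Proof. intros [Hm _]; exact Hm. Qed.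

Lemma CAT1_midpoint_cos (X : Type) (d : X -> X -> R) :
  CAT1 d -> (forall x y, d x y < PI / 2) ->
  forall y1 y2 : X, exists m : X, forall x : X,
    (cos (d x y1) + cos (d x y2)) / (2 * cos (d y1 y2 / 2)) <= cos (d x m).
Proof.
  intros [[Hnn [H0 [Hsym Htri]]] [Hgeo Hcat]] Hsmall y1 y2.
  pose proof PI_RGT_0.
  set (l := d y1 y2).
  destruct (Rle_lt_or_eq_dec 0 l (Hnn y1 y2)) as [Hl | Hl]; cycle 1.
  { assert (y1 = y2) as <- by (apply H0; auto).
    exists y1; intros x; rewrite <- Hl, Rdiv_0_l, cos_0; lra. }
  assert (l < PI / 2) by apply Hsmall.
  destruct (Hgeo y1 y2) as [c12 G12]; [fold l; lra |].
  exists (c12 (l / 2)); intros x.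
  set (a := d x y1); set (b := d y2 x).
  assert (0 <= a /\ a < PI / 2) as [] by (split; [apply Hnn | apply Hsmall]).
  assert (0 <= b /\ b < PI / 2) as [] by (split; [apply Hnn | apply Hsmall]).
  assert (l <= a + b) by (unfold l, a, b; rewrite (Hsym x y1), (Hsym y2 x); apply Htri).
  assert (a <= b + l) by (unfold l, a, b; rewrite (Hsym y2 x), (Hsym y1 y2); apply Htri).
  assert (b <= a + l) by (unfold l, a, b; rewrite (Hsym y2 x); apply Htri).
  destruct (S2_comparison_apex a b (l / 2)) as (P & HP & Pa & Pb & Pm); try lra.
  destruct (Hgeo x y1) as [cxy Gxy]; [fold a; lra |].
  destruct (Hgeo y2 x) as [czx Gzx]; [fold b; lra |].
  set (yb := (cos (l / 2), - sin (l / 2), 0)); set (zb := (cos (l / 2), sin (l / 2), 0)).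
  assert (Hcs := sin2_cos2 (l / 2)); unfold Rsqr in Hcs.
  assert (Hyb : on_S2 yb) by (apply on_S2_circle; lra).
  assert (Hzb : on_S2 zb) by (apply on_S2_circle; lra).
  assert (Hmb : on_S2 (1, 0, 0)) by (apply on_S2_circle; lra).
  assert (Ha : sdist P yb = a) by (apply sdist_of_dot3; [lra | exact Pa]).
  assert (Hl2 : sdist yb zb = l).
  { apply sdist_of_dot3; [lra |].
    unfold yb, zb; simpl.
    transitivity (cos (2 * (l / 2))); [rewrite cos_2a; ring | f_equal; field]. }
  assert (Hb : sdist zb P = b) by (apply sdist_of_dot3; [lra | rewrite dot3_comm; exact Pb]).
  (* x is the vertex of the comparison triangle, the midpoint c12 (l / 2) corresponds to (1, 0, 0). *)
  assert (Hmid : d x (c12 (l / 2)) <= sdist P (1, 0, 0)).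
  { apply (Hcat x y1 y2 cxy c12 czx Gxy G12 Gzx ltac:(fold a b l; lra) P yb zb HP Hyb Hzb
             Ha Hl2 Hb).
    - left; exists 0; destruct Gxy as [Gx _].
      repeat split; auto; try lra.
      + exact (sdist_refl P HP).
      + rewrite Ha; unfold a; ring.
    - right; left; exists (l / 2); fold l.
      replace (l - l / 2) with (l / 2) by field.
      repeat split; auto; try lra;
        (apply sdist_of_dot3; [lra | unfold yb, zb; simpl; ring]). }
  unfold sdist in Hmid; rewrite Pm in Hmid.
  assert (Hp : -1 <= (cos a + cos b) / (2 * cos (l / 2)) <= 1).
  { rewrite <- Pm; destruct P as [[p1 p2] p3]; unfold on_S2 in HP; simpl in *; nra. }
  rewrite (Hsym x y2); fold a b l.
  rewrite <- (cos_acos _ Hp) at 1.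
  pose proof (acos_bound ((cos a + cos b) / (2 * cos (l / 2)))).
  pose proof (Hnn x (c12 (l / 2))); pose proof (Hsmall x (c12 (l / 2))).
  apply cos_decr_1; lra.
Qed.

Definition liminf_cos_ge {X : Type} (d : X -> X -> R) (xs : nat -> X) (y : X) (r : R) :=
  forall eps, 0 < eps -> exists N : nat, forall n, (N <= n)%nat -> r - eps <= cos (d (xs n) y).

Section LiminfCos.
Variables (X : Type) (d : X -> X -> R) (xs : nat -> X).

Lemma liminf_cos_ge_weaken y r r' : liminf_cos_ge d xs y r -> r' <= r -> liminf_cos_ge d xs y r'.
Proof.
  intros H Hr e He; destruct (H e He) as [N HN]; exists N; intros n Hn.
  specialize (HN n Hn); lra.
Qed.

Lemma liminf_cos_ge_le1 y r : liminf_cos_ge d xs y r -> r <= 1.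
Proof.
  intros H; destruct (Rle_dec r 1) as [| Hr]; [assumption |].
  destruct (H ((r - 1) / 2)) as [N HN]; [lra |].
  specialize (HN N (le_n _)); pose proof (COS_bound (d (xs N) y)); lra.
Qed.

Lemma liminf_cos_ge_of_le y r : (forall n, r <= cos (d (xs n) y)) -> liminf_cos_ge d xs y r.
Proof. intros H e He; exists 0%nat; intros n _; specialize (H n); lra. Qed.

Lemma liminf_cos_ge_closed y r :
  (forall eta, 0 < eta -> liminf_cos_ge d xs y (r - eta)) -> liminf_cos_ge d xs y r.
Proof.
  intros H e He; destruct (H (e / 2) ltac:(lra) (e / 2) ltac:(lra)) as [N HN].
  exists N; intros n Hn; specialize (HN n Hn); lra.
Qed.

Lemma liminf_cos_ge_dominated (y1 y2 m : X) k r1 r2 : 0 < k ->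
  (forall x, (cos (d x y1) + cos (d x y2)) / (2 * k) <= cos (d x m)) ->
  liminf_cos_ge d xs y1 r1 -> liminf_cos_ge d xs y2 r2 ->
  liminf_cos_ge d xs m ((r1 + r2) / (2 * k)).
Proof.
  intros Hk Hm H1 H2 e He.
  destruct (H1 (e * k)) as [N1 HN1]; [nra |].
  destruct (H2 (e * k)) as [N2 HN2]; [nra |].
  exists (Nat.max N1 N2); intros n Hn.
  specialize (HN1 n ltac:(lia)); specialize (HN2 n ltac:(lia)).
  apply Rle_trans with (2 := Hm (xs n)).
  replace ((r1 + r2) / (2 * k) - e) with ((r1 - e * k + (r2 - e * k)) / (2 * k)) by (field; lra).
  apply Rmult_le_compat_r; [apply Rlt_le, Rinv_0_lt_compat |]; lra.
Qed.

Lemma liminf_cos_ge_move y z r : is_metric d ->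
  liminf_cos_ge d xs y r -> liminf_cos_ge d xs z (r - d y z).
Proof.
  intros (_ & _ & Hsym & Htri) H e He; destruct (H e He) as [N HN]; exists N; intros n Hn.
  specialize (HN n Hn).
  assert (Rabs (d (xs n) y - d (xs n) z) <= d y z).
  { apply Rabs_le; pose proof (Htri (xs n) y z); pose proof (Htri (xs n) z y).
    rewrite (Hsym z y) in *; lra. }
  pose proof (Rabs_cos_sub_le (d (xs n) y) (d (xs n) z)).
  pose proof (Rle_abs (cos (d (xs n) y) - cos (d (xs n) z))); lra.
Qed.

End LiminfCos.

Lemma Rmin_contraction_eventually_ge (e : nat -> R) (th : R) (N : nat) : 0 <= th < 1 ->
  (forall n, (N <= n)%nat -> th * Rmin 0 (e n) <= e (S n)) ->
  forall eps, 0 < eps -> exists K : nat, forall n, (K <= n)%nat -> - eps <= e n.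
Proof.
  intros Hth Hstep eps Heps.
  set (m := Rmin 0 (e N)).
  assert (Hm : m <= 0) by apply Rmin_l.
  assert (Hdecay : forall k, th ^ k * m <= e (N + k)%nat).
  { induction k as [| k IH].
    - rewrite Nat.add_0_r; simpl; rewrite Rmult_1_l; apply Rmin_r.
    - replace (N + S k)%nat with (S (N + k)) by lia.
      apply Rle_trans with (2 := Hstep (N + k)%nat ltac:(lia)).
      simpl; rewrite Rmult_assoc; apply Rmult_le_compat_l; [lra |].
      apply Rmin_glb; [| exact IH].
      pose proof (pow_le th k (proj1 Hth)); nra. }
  destruct (pow_lt_1_zero th ltac:(rewrite Rabs_pos_eq; lra) (eps / (1 - m))) as [K HK].
  { apply Rdiv_lt_0_compat; lra. }
  exists (N + K)%nat; intros n Hn.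
  replace n with (N + (n - N))%nat by lia.
  specialize (HK (n - N)%nat ltac:(lia)); specialize (Hdecay (n - N)%nat).
  rewrite Rabs_pos_eq in HK by (apply pow_le; lra).
  apply (Rmult_lt_compat_r (1 - m)) in HK; [| lra].
  unfold Rdiv in HK; rewrite Rmult_assoc, Rinv_l, Rmult_1_r in HK by lra.
  pose proof (pow_le th (n - N) (proj1 Hth)); nra.
Qed.

(* With weights A, B as in the definition of a vicinal map: B / (A + B) <= 2 / (2 + c^2). *)
Lemma weighted_mean_catch_up (A B W1 W0 P s c : R) : c * c <= A -> 0 <= B <= 2 -> 0 < c ->
  (A + B) * W1 >= A * P + B * W0 -> s <= P ->
  2 / (2 + c * c) * Rmin 0 (W0 - s) <= W1 - s.
Proof.
  intros HA HB Hc Hv HP.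
  assert (Hpos : 0 < A + B) by nra.
  assert (Hm : (A + B) * (W1 - s) >= B * (W0 - s)) by nra.
  unfold Rmin; destruct (Rle_dec 0 (W0 - s)).
  - rewrite Rmult_0_r; nra.
  - assert (Hth : B <= (A + B) * (2 / (2 + c * c))).
    { apply Rmult_le_reg_r with (2 + c * c); [nra |].
      rewrite Rmult_assoc; unfold Rdiv; rewrite Rmult_assoc, Rinv_l by nra; nra. }
    apply Rmult_le_reg_l with (A + B); [lra |].
    assert (W0 - s < 0) by lra; nra.
Qed.

Lemma liminf_cos_ge_vicinal {X : Type} (d : X -> X -> R) (T : X -> X) (xs : nat -> X) c z r :
  is_metric d -> 0 < c -> (forall u v, c <= cos (d u v)) -> vicinal d T ->
  (forall n, xs (S n) = T (xs n)) ->
  liminf_cos_ge d xs z r -> liminf_cos_ge d xs (T z) r.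
Proof.
  intros (_ & _ & Hsym & _) Hc Hcos Hv Horbit H e He.
  destruct (H (e / 2)) as [N HN]; [lra |].
  set (s := r - e / 2).
  assert (Hstep : forall n, (N <= n)%nat ->
    2 / (2 + c * c) * Rmin 0 (cos (d (xs n) (T z)) - s) <= cos (d (xs (S n)) (T z)) - s).
  { intros n Hn.
    pose proof (Hv (xs n) z) as V; cbv zeta in V.
    rewrite <- Horbit, (Hsym (T z) (xs n)) in V.
    set (Cx := cos (d (xs (S n)) (xs n))) in V; set (Cy := cos (d (T z) z)) in V.
    assert (c <= Cx <= 1) by (split; [apply Hcos | apply COS_bound]).
    assert (c <= Cy <= 1) by (split; [apply Hcos | apply COS_bound]).
    assert (c * c <= Cx ^ 2 <= 1) as [HCx0 HCx1] by (split; nra).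
    assert (0 <= Cy ^ 2 <= 1) as [HCy0 HCy1] by (split; nra).
    apply weighted_mean_catch_up with (3 := Hc) (4 := V).
    - assert (0 <= Cx ^ 2 * Cy ^ 2) by (apply Rmult_le_pos; nra); nra.
    - split; [apply Rmult_le_pos |]; nra.
    - unfold s; apply HN; lia. }
  assert (Hth : 0 <= 2 / (2 + c * c) < 1).
  { split; [apply Rlt_le, Rdiv_lt_0_compat; nra |].
    apply Rmult_lt_reg_r with (2 + c * c); [nra |].
    unfold Rdiv; rewrite Rmult_assoc, Rinv_l by nra; nra. }
  destruct (Rmin_contraction_eventually_ge _ _ N Hth Hstep (e / 2)) as [K HK]; [lra |].
  exists K; intros n Hn; specialize (HK n Hn); simpl in HK; unfold s in HK; lra.
Qed.

Lemma eventually_inv_succ_lt e : 0 < e -> exists K : nat, forall k, (K <= k)%nat -> / (INR k + 1) < e.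
Proof.
  intros He; destruct (archimed_cor1 e He) as [K [HK HK0]]; exists K; intros k Hk.
  apply le_INR in Hk; apply lt_0_INR in HK0.
  apply Rle_lt_trans with (2 := HK); apply Rinv_le_contravar; lra.
Qed.

Definition liminf_cos_values {X : Type} (d : X -> X -> R) (xs : nat -> X) (r : R) : Prop :=
  exists y, liminf_cos_ge d xs y r.

Section AsymptoticCenter.
Variables (X : Type) (d : X -> X -> R) (D : R) (xs : nat -> X).
Hypotheses (d_CAT1 : CAT1 d) (d_le_D : forall x y, d x y <= D) (D_lt : D < PI / 2).

Let d_metric : is_metric d := CAT1_metric d d_CAT1.

Lemma cos_diam_le_cos_dist u v : cos D <= cos (d u v).
Proof.
  destruct d_metric as [Hnn _]; pose proof PI_RGT_0.
  pose proof (Hnn u v); pose proof (d_le_D u v); apply cos_decr_1; lra.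
Qed.

Lemma cos_diam_pos : 0 < cos D.
Proof.
  destruct d_metric as [Hnn _]; pose proof (Hnn (xs 0%nat) (xs 0%nat)).
  pose proof (d_le_D (xs 0%nat) (xs 0%nat)); apply cos_gt_0; lra.
Qed.

Lemma liminf_cos_values_lub : {M | is_lub (liminf_cos_values d xs) M}.
Proof.
  apply completeness.
  - exists 1; intros r [y Hy]; exact (liminf_cos_ge_le1 _ _ _ _ _ Hy).
  - exists (cos D), (xs 0%nat); apply liminf_cos_ge_of_le; intros; apply cos_diam_le_cos_dist.
Qed.

Variable M : R.
Hypothesis M_lub : is_lub (liminf_cos_values d xs) M.

Lemma lub_pos : 0 < M.
Proof.
  pose proof cos_diam_pos; enough (cos D <= M) by lra.
  apply (proj1 M_lub); exists (xs 0%nat).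
  apply liminf_cos_ge_of_le; intros; apply cos_diam_le_cos_dist.
Qed.

Lemma liminf_cos_ge_pair_le y1 y2 r1 r2 :
  liminf_cos_ge d xs y1 r1 -> liminf_cos_ge d xs y2 r2 -> (r1 + r2) / 2 <= M * cos (d y1 y2 / 2).
Proof.
  intros H1 H2.
  destruct (CAT1_midpoint_cos X d d_CAT1 ltac:(intros; eapply Rle_lt_trans; eauto) y1 y2)
    as [m Hm].
  destruct d_metric as [Hnn _].
  assert (Hk : 0 < cos (d y1 y2 / 2)).
  { apply cos_gt_0; pose proof (Hnn y1 y2); pose proof (d_le_D y1 y2); lra. }
  assert (HM : (r1 + r2) / (2 * cos (d y1 y2 / 2)) <= M).
  { apply (proj1 M_lub); exists m; exact (liminf_cos_ge_dominated _ _ _ _ _ _ _ _ _ Hk Hm H1 H2). }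
  apply Rmult_le_reg_r with (/ cos (d y1 y2 / 2)); [apply Rinv_0_lt_compat; lra |].
  rewrite Rmult_assoc, Rinv_r, Rmult_1_r by lra.
  replace ((r1 + r2) / 2 * / cos (d y1 y2 / 2)) with ((r1 + r2) / (2 * cos (d y1 y2 / 2)))
    by (field; lra).
  exact HM.
Qed.

Lemma liminf_cos_ge_near_lub eps : 0 < eps -> exists y, liminf_cos_ge d xs y (M - eps).
Proof.
  intros Heps; apply NNPP; intros Hnone.
  enough (M <= M - eps) by lra.
  apply (proj2 M_lub); intros r [y Hy].
  destruct (Rle_dec r (M - eps)) as [| Hgt]; [assumption |].
  exfalso; apply Hnone; exists y; apply liminf_cos_ge_weaken with r; [exact Hy | lra].
Qed.

Lemma liminf_cos_ge_near_lub_close y1 y2 r : 0 <= r <= PI ->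
  liminf_cos_ge d xs y1 (M * cos (r / 2)) -> liminf_cos_ge d xs y2 (M * cos (r / 2)) ->
  d y1 y2 <= r.
Proof.
  intros Hr H1 H2.
  pose proof (liminf_cos_ge_pair_le _ _ _ _ H1 H2) as Hpair; pose proof lub_pos.
  destruct d_metric as [Hnn _]; pose proof (Hnn y1 y2); pose proof (d_le_D y1 y2).
  assert (cos (r / 2) <= cos (d y1 y2 / 2)) by nra.
  enough (d y1 y2 / 2 <= r / 2) by lra.
  apply cos_decr_0; lra.
Qed.

Lemma liminf_cos_ge_lub_unique y1 y2 :
  liminf_cos_ge d xs y1 M -> liminf_cos_ge d xs y2 M -> y1 = y2.
Proof.
  intros H1 H2; apply d_metric.
  pose proof (liminf_cos_ge_pair_le _ _ _ _ H1 H2) as Hpair; pose proof lub_pos.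
  destruct d_metric as [Hnn _]; pose proof (d_le_D y1 y2).
  destruct (Rle_lt_or_eq_dec 0 (d y1 y2) (Hnn y1 y2)) as [Hpos | <-]; [exfalso | reflexivity].
  assert (cos (d y1 y2 / 2) < cos 0) by (apply cos_decreasing_1; lra).
  rewrite cos_0 in *; nra.
Qed.

Lemma liminf_cos_ge_lub_attained : complete d -> exists z, liminf_cos_ge d xs z M.
Proof.
  intros Hcomplete.
  assert (Hnear : forall k : nat, exists y, liminf_cos_ge d xs y (M - / (INR k + 1))).
  { intros k; apply liminf_cos_ge_near_lub, Rinv_0_lt_compat; pose proof (pos_INR k); lra. }
  set (ys k := proj1_sig (constructive_indefinite_description _ (Hnear k))).
  assert (Hys : forall k, liminf_cos_ge d xs (ys k) (M - / (INR k + 1)))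
    by (intros k; exact (proj2_sig (constructive_indefinite_description _ (Hnear k)))).
  destruct (Hcomplete ys) as [z Hz].
  - intros eps Heps.
    set (r := Rmin (eps / 2) PI).
    assert (Hr : 0 < r <= PI) by (pose proof PI_RGT_0; unfold r, Rmin; destruct Rle_dec; lra).
    assert (Hcos : cos (r / 2) < 1) by (rewrite <- cos_0; apply cos_decreasing_1; lra).
    destruct (eventually_inv_succ_lt (M * (1 - cos (r / 2)))) as [K HK].
    { pose proof lub_pos; apply Rmult_lt_0_compat; lra. }
    exists K; intros m n Hm Hn.
    apply Rle_lt_trans with r; [| unfold r; pose proof (Rmin_l (eps / 2) PI); lra].
    apply liminf_cos_ge_near_lub_close; [lra | |];
      (eapply liminf_cos_ge_weaken; [apply Hys |]); [specialize (HK m Hm) | specialize (HK n Hn)];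
      lra.
  - exists z; apply liminf_cos_ge_closed; intros eta Heta.
    destruct (Hz (eta / 2)) as [N HN]; [lra |].
    destruct (eventually_inv_succ_lt (eta / 2)) as [K HK]; [lra |].
    set (k := Nat.max N K).
    eapply liminf_cos_ge_weaken; [apply (liminf_cos_ge_move _ _ _ (ys k)); [exact d_metric | apply Hys] |].
    specialize (HN k ltac:(lia)); specialize (HK k ltac:(lia)); lra.
Qed.
End AsymptoticCenter.

Theorem corollary4p3 (X : Type) (d : X -> X -> R) (x0 : X) :
  CAT1 d -> complete d -> diam_lt d (PI / 2) ->
  forall T : X -> X, vicinal d T -> exists x : X, T x = x.
Proof.
  intros Hcat Hcomplete [D [HD Hdiam]] T Hvicinal.
  set (xs n := Nat.iter n T x0).
  destruct (liminf_cos_values_lub X d D xs Hcat Hdiam HD) as [M HM].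
  destruct (liminf_cos_ge_lub_attained X d D xs Hcat Hdiam HD M HM Hcomplete) as [z Hz].
  exists z; apply (liminf_cos_ge_lub_unique X d D xs Hcat Hdiam HD M HM); [| exact Hz].
  apply (liminf_cos_ge_vicinal d T xs (cos D)); auto.
  - exact (CAT1_metric d Hcat).
  - exact (cos_diam_pos X d D xs Hcat Hdiam HD).
  - exact (cos_diam_le_cos_dist X d D Hcat Hdiam HD).
Qed.
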